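(* Let $X$ be a crowded (dense-in-itself) topological space containing an open dense subset $D$ which is metrizable. Then $X$ is $Disc(X)$-selectively pseudocompact if and only if $X$ is $Nwd(X)$-selectively pseudocompact, where $Disc(X)$ is the family of discrete subsets of $X$ and $Nwd(X)$ the family of nowhere dense subsets of $X$.
   Context: For a topological space $X$ and $\mathcal A\subseteq\mathcal P(X)$, $X$ is called $\mathcal A$-selectively pseudocompact if for every sequence $\langle U_n:n\in\omega\rangle$ of pairwise disjoint non-empty open subsets of $X$ one can choose sets $A_n\in\mathcal A$ with $A_n\subseteq U_n$ such that the family $\{A_n:n\in\omega\}$ has an accumulation point, i.e. there is a point $x\in X$ every neighbourhood of which meets $A_n$ for infinitely many $n$. *)

From HB Require Import structures.
From mathcomp Require Import all_boot all_order all_algebra.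
From mathcomp Require Import all_classical all_reals all_analysis.
From mathcomp Require Import Rstruct Rstruct_topology.
Set Implicit Arguments. Unset Strict Implicit. Unset Printing Implicit Defensive.
Import Order.TTheory GRing.Theory Num.Theory.
Local Open Scope classical_set_scope.
Local Open Scope ring_scope.

Section SelPc.
Variable T : topologicalType.

Definition crowded : Prop := forall x : T, ~ open [set x].

Definition discrete_subset (A : set T) : Prop := A `<=` isolated A.

Definition nowhere_dense (A : set T) : Prop := (closure A)° = set0.

Definition Disc : set (set T) := [set A | discrete_subset A].
Definition Nwd : set (set T) := [set A | nowhere_dense A].

Definition acc_point (A : nat -> set T) (x : T) : Prop :=
  forall U, nbhs x U -> infinite_set [set n | U `&` A n !=set0].

Definition sel_pseudocompact (calA : set (set T)) : Prop :=
  forall U : nat -> set T,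
    (forall n, open (U n) /\ U n !=set0) ->
    (forall n m, n <> m -> U n `&` U m = set0) ->
    exists A : nat -> set T,
      (forall n, calA (A n) /\ A n `<=` U n) /\ exists x, acc_point A x.

Definition metrizable_subspace (D : set T) : Prop :=
  exists d : T -> T -> Rdefinitions.R,
    (forall x y, D x -> D y -> 0 <= d x y) /\
    (forall x y, D x -> D y -> (d x y = 0 <-> x = y)) /\
    (forall x y, D x -> D y -> d x y = d y x) /\
    (forall x y z, D x -> D y -> D z -> d x z <= d x y + d y z) /\
    (forall W, W `<=` D ->
       ((exists V, open V /\ W = V `&` D) <->
        (forall x, W x -> exists2 e : Rdefinitions.R, 0 < e &
                   [set y | D y /\ d x y < e] `<=` W))).

End SelPc.

From mathcomp Require Import all_boot all_order all_algebra.
From mathcomp Require Import all_classical all_reals all_analysis.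
From mathcomp Require Import Rstruct lra.
Set Implicit Arguments.
Unset Strict Implicit.
Unset Printing Implicit Defensive.
Import Order.TTheory GRing.Theory Num.Theory.
Local Open Scope classical_set_scope.
Local Open Scope ring_scope.

(* Both properties may be tested on the sequence U_n `&` D, which is again a
   sequence of disjoint non-empty open sets since D is open and dense; and
   replacing each chosen set A_n by a set whose closure contains A_n keeps
   every accumulation point.  Inside D, which is T1, a discrete set of the
   crowded space X is nowhere dense: an isolated point of a set dense in an
   open set would be isolated in X.  Conversely, for A nowhere dense inside an
   open O contained in D, take by Zorn's lemma a maximal set B of points y of
   O, each with a radius rho y such that the ball of radius 2 rho y around y
   lies in O and misses A, and such that distinct points b, c of B satisfy
   rho b <= d b c.  Then B is discrete, and every point of A lies in the
   closure of B: near a point of A there are such y, and any of them could be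
   added to B if B stayed far from A. *)

Section TopologicalReductions.
Variable X : topologicalType.

Lemma acc_point_closure (A B : nat -> set X) (x : X) :
  (forall n, A n `<=` closure (B n)) -> acc_point A x -> acc_point B x.
Proof.
move=> AB Ax U /nbhs_interior/Ax; apply: sub_infinite_set => n [a [Ua An]].
by have [b [Bb Ub]] := AB n a An U Ua; exists b.
Qed.

Lemma sel_pseudocompact_transfer (calA calB : set (set X)) (D : set X) :
  open D -> dense D ->
  (forall O A, open O -> O `<=` D -> calA A -> A `<=` O ->
     exists2 B, calB B /\ B `<=` O & A `<=` closure B) ->
  sel_pseudocompact calA -> sel_pseudocompact calB.
Proof.
move=> oD dD AB selA U Uopen Udisj.
have UDopen n : open (U n `&` D) /\ U n `&` D !=set0.
  by have [oU U0] := Uopen n; split; [exact: openI | exact: dD].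
have UDdisj n m : n <> m -> (U n `&` D) `&` (U m `&` D) = set0.
  move=> nm; apply/seteqP; split => // z [[Un _] [Um _]].
  by rewrite -(Udisj n m nm).
have [A [AU [x Ax]]] := selA _ UDopen UDdisj.
have /choice[B BP] n :
    exists B, (calB B /\ B `<=` U n `&` D) /\ A n `<=` closure B.
  have [cA AUn] := AU n.
  by have [B ? ?] := AB _ _ (UDopen n).1 (@subIsetr _ _ _) cA AUn; exists B.
exists B; split.
  by move=> n; have [[cB BU] _] := BP n; split => // z /BU [].
by exists x; apply: acc_point_closure Ax => n; case: (BP n).
Qed.

Lemma discrete_nowhere_dense (D B : set X) : crowded X -> open D ->
  (forall b y, D b -> D y -> y <> b -> exists2 N, nbhs y N & ~ N b) ->
  B `<=` D -> discrete_subset B -> nowhere_dense B.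
Proof.
move=> cr oD sepD BD dB; apply/seteqP; split => // z.
rewrite /interior nbhsE => -[U [oU Uz] UB].
have [b [Bb Ub]] := UB z Uz U (open_nbhs_nbhs (conj oU Uz)).
have [_ [V + VB]] := dB b Bb; rewrite nbhsE => -[V' [oV' V'b] V'V].
pose W := U `&` V' `&` D.
have oW : open W by apply: openI => //; exact: openI.
have Wb : W b by split; [split | exact: BD].
have Wb1 : W `<=` [set b].
  move=> y Wy; apply/not_notP => yb; have [[Uy _] Dy] := Wy.
  have [N Ny Nb] := sepD b y (BD _ Bb) Dy yb.
  have [w [Bw [Nw [[_ V'w] _]]]] :=
    UB y Uy _ (filterI Ny (open_nbhs_nbhs (conj oW Wy))).
  have : (V `&` B) w by split => //; exact: V'V.
  by rewrite VB => wb; apply: Nb; rewrite -wb.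
apply: (cr b); rewrite openE => _ ->.
exact: filterS Wb1 (open_nbhs_nbhs (conj oW Wb)).
Qed.

End TopologicalReductions.

Section MetricOnOpenSubspace.
Variables (X : topologicalType) (D : set X) (d : X -> X -> Rdefinitions.R).
Hypotheses (oD : open D)
  (d_ge0 : forall x y, D x -> D y -> 0 <= d x y)
  (d_eq0 : forall x y, D x -> D y -> (d x y = 0 <-> x = y))
  (d_sym : forall x y, D x -> D y -> d x y = d y x)
  (d_triangle : forall x y z, D x -> D y -> D z -> d x z <= d x y + d y z)
  (d_topology : forall W, W `<=` D ->
       ((exists V, open V /\ W = V `&` D) <->
        (forall x, W x -> exists2 e : Rdefinitions.R, 0 < e &
                   [set y | D y /\ d x y < e] `<=` W))).

Definition dball (a : X) (r : Rdefinitions.R) := [set y | D y /\ d a y < r].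

Lemma dball_open a r : D a -> open (dball a r).
Proof.
move=> Da; have [V [oV ->]] : exists V, open V /\ dball a r = V `&` D.
  have aD : dball a r `<=` D by move=> y [].
  apply: (d_topology aD).2 => z [Dz dz].
  exists (r - d a z) => [|y [Dy dy]]; first by rewrite subr_gt0.
  by split => //; have := d_triangle Da Dz Dy; lra.
exact: openI.
Qed.

Lemma dball_center a r : D a -> 0 < r -> dball a r a.
Proof. by move=> Da r0; split => //; rewrite (proj2 (d_eq0 Da Da) erefl). Qed.

Lemma dball_nbhs a r : D a -> 0 < r -> nbhs a (dball a r).
Proof.
move=> Da r0; apply: open_nbhs_nbhs.
by split; [exact: dball_open | exact: dball_center].
Qed.

Lemma nbhs_dball a N : D a -> nbhs a N -> exists2 e, 0 < e & dball a e `<=` N.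
Proof.
move=> Da; rewrite nbhsE => -[V [oV Va] VN].
have VDopen : exists V', open V' /\ V `&` D = V' `&` D by exists V.
have [|e e0 VDe] := (d_topology (@subIsetr _ V D)).1 VDopen a; first by split.
by exists e => // y /VDe [] /VN.
Qed.

Lemma dball_separates b y :
  D b -> D y -> y <> b -> exists2 N, nbhs y N & ~ N b.
Proof.
move=> Db Dy yb; exists (dball y (d y b)); last by move=> [_]; rewrite ltxx.
apply: dball_nbhs => //; rewrite lt0r d_ge0 // andbT.
by apply/eqP => /(d_eq0 Dy Db).
Qed.

Definition dseparated (rho : X -> Rdefinitions.R) (B : set X) :=
  forall b c, B b -> B c -> b <> c -> rho b <= d b c.

Lemma dseparated_discrete rho B : B `<=` D -> (forall b, B b -> 0 < rho b) ->
  dseparated rho B -> discrete_subset B.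
Proof.
move=> BD rho_gt0 Bsep b Bb; split; first exact: mem_set.
exists (dball b (rho b)); first exact: dball_nbhs (BD _ Bb) (rho_gt0 _ Bb).
apply/seteqP; split => [y [[Dy dby] By]|_ ->].
  apply/not_notP => yb; have := Bsep _ _ Bb By (nesym yb).
  by move=> /le_lt_trans /(_ dby); rewrite ltxx.
by split => //; exact: dball_center (BD _ Bb) (rho_gt0 _ Bb).
Qed.

Lemma dseparated_setU1 rho B a y e : D a -> D y -> B `<=` D ->
  (forall c, (B `|` [set y]) c -> 2 * rho c <= d c a) ->
  d a y < e / 2 -> (forall b, B b -> e <= d a b) ->
  dseparated rho B -> dseparated rho (B `|` [set y]).
Proof.
move=> Da Dy BD rho_a ay Bfar Bsep b c [Bb|->] [Bc|->] bc //.
- exact: Bsep.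
- have := rho_a b (or_introl Bb); have := Bfar b Bb.
  have := d_triangle (BD _ Bb) Dy Da.
  have := d_sym Da Dy; have := d_sym Da (BD _ Bb); lra.
- have := rho_a y (or_intror erefl); have := Bfar c Bc.
  have := d_triangle Da Dy (BD _ Bc); have := d_sym Da Dy.
  have := d_ge0 Da Dy; lra.
Qed.

Lemma nowhere_dense_dball_gap (A : set X) a e :
  nowhere_dense A -> D a -> 0 < e -> exists y r,
    [/\ 0 < r, D y, d a y < e / 2 & dball y (2 * r) `<=` dball a e `\` A].
Proof.
move=> nA Da e0; have e20 : 0 < e / 2 by rewrite divr_gt0.
have [y [[Dy ay] /existsNP[K /not_implyP[Ky AK]]]] :
    exists y, dball a (e / 2) y /\ ~ closure A y.
  apply: contrapT => Acl; suff : (closure A)° a by rewrite nA.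
  apply: filterS (dball_nbhs Da e20) => y ay.
  by apply: contrapT => ncl; apply: Acl; exists y.
have aey : dball a e y by split => //; lra.
have aeyN : nbhs y (dball a e).
  by apply: open_nbhs_nbhs; split => //; exact: dball_open.
have [r r0 yKa] := nbhs_dball Dy (filterI Ky aeyN).
exists y, (r / 2); split => //; first by rewrite divr_gt0.
have -> : 2 * (r / 2) = r by lra.
by move=> z /yKa[Kz az]; split => // Az; apply: AK; exists z.
Qed.

Lemma maximal_dseparated rho (G : set X) : exists B,
  (B `<=` G /\ dseparated rho B) /\
  forall C, B `<` C -> ~ (C `<=` G /\ dseparated rho C).
Proof.
apply: Zorn_bigcup => F FP Ftot; split; first by move=> y [Y /FP[YG _] /YG].
move=> b c [Y1 F1 b1] [Y2 F2 c2].
have [Y12|Y21] := Ftot _ _ F1 F2; first exact: (FP _ F2).2 (Y12 _ b1) c2.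
exact: (FP _ F1).2 b1 (Y21 _ c2).
Qed.

Lemma nowhere_dense_sub_closure_discrete (O A : set X) :
  open O -> O `<=` D -> nowhere_dense A -> A `<=` O ->
  exists2 B, discrete_subset B /\ B `<=` O & A `<=` closure B.
Proof.
move=> oO OD nA AO.
pose admissible y r := 0 < r /\ dball y (2 * r) `<=` O `\` A.
have /choice[rho rhoP] y :
    exists r, (exists r, admissible y r) -> admissible y r.
  have [[r yr]|noadm] := pselect (exists r, admissible y r); first by exists r.
  by exists 0 => /noadm.
pose G := [set y | D y /\ exists r, admissible y r].
have [B [[BG Bsep] Bmax]] := maximal_dseparated rho G.
have rhoB b : B b -> admissible b (rho b) by move=> /BG[_ /rhoP].
have BD b : B b -> D b by move=> /BG[].
exists B; first split.
- by apply: dseparated_discrete Bsep => // b /rhoB[].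
- move=> b Bb; have [rho0 bOA] := rhoB b Bb.
  have rho2 : 0 < 2 * rho b by lra.
  by have [] := bOA b (dball_center (BD _ Bb) rho2).
move=> a Aa N Na; have Da := OD _ (AO _ Aa).
have [e e0 eNO] :=
  nbhs_dball Da (filterI Na (open_nbhs_nbhs (conj oO (AO _ Aa)))).
have [y [r [r0 Dy ay yA]]] := nowhere_dense_dball_gap nA Da e0.
have Gy : G y by split => //; exists r; split => // z /yA[/eNO[_ Oz] nAz].
apply: contrapT => noBN.
have Bfar b : B b -> e <= d a b.
  move=> Bb; rewrite leNgt; apply/negP => ab; apply: noBN.
  by exists b; split => //; exact: (eNO b (conj (BD _ Bb) ab)).1.
have nBy : ~ B y.
  have aey : dball a e y by split => //; lra.
  by move=> By; apply: noBN; exists y; split => //; exact: (eNO y aey).1.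
apply: (Bmax (B `|` [set y])).
  by split; [move=> z; left | move=> /(_ y (or_intror erefl))].
split; first by move=> z [/BG|->].
apply: (dseparated_setU1 Da Dy BD _ ay Bfar Bsep) => c Bc.
have [_ /rhoP[_ cOA]] : G c by case: Bc => [/BG|->].
by rewrite leNgt; apply/negP => ca; have [_] := cOA a (conj Da ca).
Qed.

End MetricOnOpenSubspace.

Theorem proposition1p6 (X : topologicalType) (D : set X) :
  @crowded X -> open D -> dense D -> metrizable_subspace D ->
  (sel_pseudocompact (@Disc X) <-> sel_pseudocompact (@Nwd X)).
Proof.
move=> cr oD dD [d [d_ge0 [d_eq0 [d_sym [d_triangle d_topology]]]]].
have sepD := dball_separates oD d_ge0 d_eq0 d_triangle d_topology.
split; apply: (sel_pseudocompact_transfer oD dD) => O A oO OD.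
- move=> dA AO; exists A; last exact: subset_closure.
  by split => //; apply: discrete_nowhere_dense cr oD sepD _ dA => z /AO /OD.
- exact: (nowhere_dense_sub_closure_discrete oD d_ge0 d_eq0 d_sym d_triangle
    d_topology oO OD).
Qed.
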